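(* Let $R_n(x)=\sum_{k=0}^nR_{n,k}x^k$ for $n\ge1$. Then for every $n\ge1$, $R_n(x)$ has only real zeros, all lying in $[-1,0)$, and $R_n(x)$ separates $R_{n+1}(x)$. More precisely, $x=-1$ is a zero of $R_n(x)$ of multiplicity $\lfloor n/2\rfloor+1$, and $R_n(x)$ has $\lceil n/2\rceil-1$ further zeros, which are simple.
   Context: Let $D$ be the derivation of $\mathbb{Q}[y,z]$ with $D(y)=z^2$, $D(z)=yz$ (corresponding to $d/dx$ with $y=\tan x$, $z=\sec x$). The integers $R_{n,k}$ are defined for $n\ge1$ by $D^n(y+z)=\sum_{k=0}^nR_{n,k}y^{n-k}z^{k+1}$ in $\mathbb{Q}[y,z]$. Equivalently, $R_1(x)=1+x$ and $R_{n+1}(x)=(1+nx^2)R_n(x)+x(1-x^2)R_n'(x)$ for $n\ge1$. For real polynomials $f,F$ with only real zeros, with zeros $r_1\ge r_2\ge\cdots$ of $f$ and $s_1\ge s_2\ge\cdots$ of $F$ (listed with multiplicity), $f$ separates $F$ means $\deg f\le\deg F\le\deg f+1$ and $s_1\ge r_1\ge s_2\ge r_2\ge s_3\ge r_3\ge\cdots$. *)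

From HB Require Import structures.
From mathcomp Require Import all_boot all_order all_algebra.
From mathcomp Require Import reals.
Set Implicit Arguments. Unset Strict Implicit. Unset Printing Implicit Defensive.
Import Order.TTheory GRing.Theory Num.Theory.
Local Open Scope ring_scope.

(* Rseq m = R_{m+1}(x):  R_1 = 1 + x,
   R_{n+1} = (1 + n x^2) R_n + x (1 - x^2) R_n'. *)
Fixpoint Rseq (R : nzRingType) (m : nat) : {poly R} :=
  match m with
  | 0 => 1 + 'X
  | m'.+1 => let p := Rseq R m' in
      (1 + (m'.+1)%:R *: 'X^2) * p + 'X * (1 - 'X^2) * p^`()
  end.

(* Rpoly n = R_n(x) for n >= 1 (the value at n = 0 is irrelevant). *)
Definition Rpoly (R : nzRingType) (n : nat) : {poly R} := Rseq R n.-1.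

Definition real_zeros (R : realFieldType) (p : {poly R}) (s : seq R) : Prop :=
  sorted (fun a b : R => b <= a) s /\
  p = lead_coef p *: \prod_(r <- s) ('X - r%:P).

Definition only_real_zeros (R : realFieldType) (p : {poly R}) : Prop :=
  exists s : seq R, real_zeros p s.

Definition separates (R : realFieldType) (f F : {poly R}) : Prop :=
  exists (rs ss : seq R),
    [/\ real_zeros f rs, real_zeros F ss,
        (size f <= size F <= (size f).+1)%N &
        forall i : nat, (i < size rs)%N ->
          ss`_i >= rs`_i /\ ((i.+1 < size ss)%N -> rs`_i >= ss`_i.+1)].

From HB Require Import structures.
From mathcomp Require Import all_boot all_order all_algebra.
From mathcomp Require Import reals polyrcf.
From mathcomp Require Import ring lra zify.
Import Order.TTheory GRing.Theory Num.Theory.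
Local Open Scope ring_scope.
Set Implicit Arguments. Unset Strict Implicit. Unset Printing Implicit Defensive.

(* Write R_n = c (x+1)^(a+1) Q with a = floor(n/2), c > 0 and Q = prod (x - s_i) having
   simple zeros 0 > s_1 > ... > s_k > -1.  The recurrence gives R_(n+1) = (x+1)^(a+1) T with
   T = (1 + n x^2) Q + x (1 - x) ((a+1) Q + (x+1) Q').  Now T(0) = Q(0) > 0, the values
   T(s_i) = s_i (1 - s_i) (1 + s_i) Q'(s_i) alternate in sign, and T(-1) = (odd n - 1) Q(-1):
   for odd n, -1 is a zero of T, while for even n the sign of T(-1) continues the
   alternation.  The intermediate value theorem puts a zero of T in each gap between
   consecutive points of 0, s_1, ..., s_k (, -1), and since deg R_(n+1) <= n + 1 these are
   all the zeros of T; they interlace with the s_i, which is the separation property. *)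

Lemma exists_seq_nth (T : Type) (x0 : T) (P : nat -> T -> Prop) (K : nat) :
  (forall i, (i < K)%N -> exists x, P i x) ->
  exists2 t, size t = K & forall i, (i < K)%N -> P i (nth x0 t i).
Proof.
elim: K => [|K IH] hP; first by exists [::].
have [t st Pt] : exists2 t, size t = K & forall i, (i < K)%N -> P i (nth x0 t i).
  by apply: IH => i /ltnW; exact: hP.
have [x Px] := hP K (ltnSn K).
exists (rcons t x) => [|i]; first by rewrite size_rcons st.
rewrite ltnS leq_eqVlt nth_rcons st => /orP[/eqP->|iK]; first by rewrite ltnn eqxx.
by rewrite iK; exact: Pt.
Qed.

Lemma nth_cat_nseq (T : Type) (x0 : T) (s : seq T) m i :
  nth x0 (s ++ nseq m x0) i = nth x0 s i.
Proof.
rewrite nth_cat; case: ltnP => // le_si.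
by rewrite nth_nseq nth_default //; case: ifP.
Qed.

Lemma eq_lead_prod_XsubC (F : fieldType) (p : {poly F}) (rs : seq F) :
  p != 0 -> uniq rs -> all (root p) rs -> (size p <= (size rs).+1)%N ->
  p = lead_coef p *: \prod_(r <- rs) ('X - r%:P).
Proof.
move=> p0 urs rootp szp.
have [q def_p] := uniq_roots_prod_XsubC rootp (etrans (uniq_rootsE rs) urs).
have prod0 : \prod_(r <- rs) ('X - r%:P) != 0 by rewrite monic_neq0 ?monic_prod_XsubC.
have q0 : q != 0 by apply: contraNneq p0 => q0; rewrite def_p q0 mul0r.
rewrite def_p in szp *.
move: szp; rewrite size_mul // size_prod_XsubC addnS /= -add1n leq_add2r.
move=> /size1_polyC ->.
by rewrite mul_polyC lead_coefZ lead_coef_prod_XsubC mulr1.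
Qed.

Lemma prod_XsubC_cat_nseq (R : comNzRingType) (s : seq R) m :
  \prod_(r <- s ++ nseq m (-1)) ('X - r%:P) = ('X + 1) ^+ m * \prod_(r <- s) ('X - r%:P).
Proof.
rewrite big_cat mulrC; congr (_ * _).
by elim: m => [|m IH]; rewrite ?big_nil // big_cons IH polyCN opprK exprS.
Qed.

Section RealProducts.
Variable R : realFieldType.
Implicit Types (s : seq R) (x : R).

Lemma horner_prod_XsubC_sign s x : x \notin s ->
  0 < (-1) ^+ count (fun r => x < r) s * (\prod_(r <- s) ('X - r%:P)).[x].
Proof.
elim: s => [|r s IH]; first by rewrite big_nil hornerC mulr1 ltr01.
rewrite inE negb_or => /andP[xr /IH {}IH].
rewrite big_cons hornerM hornerXsubC /= exprD mulrACA.
apply: mulr_gt0 => //; case: (ltgtP x r) xr => // [xr | rx] _.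
- by rewrite /= expr1 mulN1r oppr_gt0 subr_lt0.
- by rewrite /= expr0 mul1r subr_gt0.
Qed.

Lemma horner_prod_XsubC_gt0 s x : all (fun r => r < x) s ->
  0 < (\prod_(r <- s) ('X - r%:P)).[x].
Proof.
move=> /allP lt_x; rewrite horner_prod big_seq; apply: prodr_gt0 => r /lt_x.
by rewrite hornerXsubC subr_gt0.
Qed.

Lemma deriv_prod_XsubC_sign s x : uniq s -> x \in s ->
  0 < (-1) ^+ count (fun r => x < r) s * (\prod_(r <- s) ('X - r%:P))^`().[x].
Proof.
move=> us xs; have /permP count_rem := perm_to_rem xs.
rewrite (perm_big _ (perm_to_rem xs)) count_rem.
rewrite big_cons derivM derivXsubC mul1r hornerD hornerM hornerXsubC subrr mul0r addr0.
by rewrite /= ltxx add0n horner_prod_XsubC_sign ?mem_rem_uniqF.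
Qed.

Lemma count_gt_nth_sorted x0 s i : sorted >%R s -> (i < size s)%N ->
  count (fun r => nth x0 s i < r) s = i.
Proof.
elim: s i => [//|x s IH] i /= xs.
have /allP ltx : all (fun y => y < x) s := order_path_min (rev_trans lt_trans) xs.
case: i => [_|i /= ltis].
  rewrite ltxx add0n; apply/eqP; rewrite -leqn0 leqNgt -has_count.
  by apply/hasPn => r /ltx /= rx; rewrite ltNge ltW.
by rewrite ltx ?mem_nth // IH ?(path_sorted xs).
Qed.

End RealProducts.

Section Knots.
Variable R : realFieldType.
Implicit Types (s t : seq R) (x : R).

(* The knots of s are 0, s_0, ..., s_(k-1), -1; past the end, knot s i is -1 as well. *)
Definition knots s : seq R := 0 :: rcons s (-1).
Definition knot s i : R := nth (-1) (knots s) i.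
Definition chain s : bool := sorted >%R (knots s).
Definition interlaces t s : Prop :=
  forall i, (i < size t)%N -> knot s i.+1 < nth (-1) t i < knot s i.

Lemma knot0 s : knot s 0 = 0.
Proof. by []. Qed.

Lemma knotS s i : knot s i.+1 = nth (-1) s i.
Proof. exact: nth_rcons_default. Qed.

Lemma size_knots s : size (knots s) = (size s).+2.
Proof. by rewrite /= size_rcons. Qed.

Lemma chain_knot_lt s i : chain s -> (i <= size s)%N -> knot s i.+1 < knot s i.
Proof. by move=> /(sortedP (-1)) lt_knots lei; apply: lt_knots; rewrite size_knots. Qed.

Lemma chain_knot_le s i : chain s -> knot s i.+1 <= knot s i.
Proof.
move=> cs; have [lei|] := leqP i (size s); first by rewrite ltW ?chain_knot_lt.
by case: i => // i lti; rewrite !knotS !nth_default // ltnW.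
Qed.

Lemma chain_knot_ltn s i j : chain s -> (i < j <= (size s).+1)%N ->
  knot s j < knot s i.
Proof.
move=> cs /andP[ltij lej].
by apply: (sorted_ltn_nth (rev_trans lt_trans)) => //; rewrite inE size_knots; lia.
Qed.

Lemma chain_knot_ge s i : chain s -> -1 <= knot s i.
Proof.
move=> cs; have [lti|] := ltnP i (size s).+1.
  have := chain_knot_ltn (i := i) (j := (size s).+1) cs.
  by rewrite lti leqnn knotS nth_default // => /(_ isT) /ltW.
by case: i => // i lei; rewrite knotS nth_default.
Qed.

Lemma chain_mem s x : chain s -> x \in s -> -1 < x < 0.
Proof.
move=> cs /(nthP (-1)) [i lti <-]; apply/andP; split.
  have := chain_knot_ltn (i := i.+1) (j := (size s).+1) cs.
  by rewrite !knotS nth_default // ltnS lti leqnn => /(_ isT).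
by rewrite -knotS; apply: (chain_knot_ltn (i := 0) cs); exact: ltnW.
Qed.

Lemma chain_sorted s : chain s -> sorted >%R s.
Proof.
apply: subseq_sorted; first exact: rev_trans lt_trans.
exact: subseq_trans (subseq_rcons s (-1)) (subseq_cons _ 0).
Qed.

Lemma chain_uniq s : chain s -> uniq s.
Proof. by move/chain_sorted; apply: sorted_uniq; [apply: rev_trans lt_trans|exact: ltxx]. Qed.

Lemma interlaces_chain t s : chain s -> interlaces t s -> chain t.
Proof.
move=> cs ts; apply/(sortedP (-1)) => i; rewrite size_knots !ltnS => lei.
rewrite -/(knot t i) -/(knot t i.+1) /=.
have knot_lb j : (j <= size t)%N -> knot s j <= knot t j.
  case: j => [_|j ltj]; first exact: lexx.
  by rewrite [knot t _]knotS; have /andP[/ltW] := ts j ltj.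
rewrite knotS; have [ltit|] := ltnP i (size t).
  by have /andP[_ /lt_le_trans] := ts i ltit; apply; apply: knot_lb; apply: ltnW.
move=> leti; have -> : i = size t by apply/eqP; rewrite eqn_leq lei leti.
rewrite nth_default //; move: (ts (size t).-1).
case: (size t) => [_|j /(_ (ltnSn j)) /andP[lt_knot _]]; first exact: ltrN10.
by rewrite knotS; apply: le_lt_trans lt_knot; apply: chain_knot_ge.
Qed.

End Knots.

Section InterlacingRoots.
Variable R : rcfType.
Implicit Types (p : {poly R}) (s t : seq R).

Lemma interlacing_roots p s K : chain s -> (K <= (size s).+1)%N ->
  (forall i, (i <= K)%N -> 0 < (-1) ^+ i * p.[knot s i]) ->
  exists2 t, size t = K & interlaces t s /\ all (root p) t.
Proof.
move=> cs leKs sgn.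
have /(exists_seq_nth (-1)) [t st tP] : forall i, (i < K)%N ->
    exists x, knot s i.+1 < x < knot s i /\ root p x.
  move=> i ltiK.
  have lt_knots : knot s i.+1 < knot s i.
    by apply: chain_knot_lt cs _; rewrite -ltnS (leq_trans ltiK).
  have sgn_change : p.[knot s i.+1] * p.[knot s i] < 0.
    have := mulr_gt0 (sgn _ ltiK) (sgn _ (ltnW ltiK)).
    by rewrite exprS mulN1r !mulNr mulrACA -expr2 sqrr_sign mul1r oppr_gt0.
  have [x] := poly_ivtoo (ltW lt_knots) sgn_change.
  by rewrite in_itv /=; exists x.
exists t => //; split=> [i|]; first by rewrite st => /tP[].
by apply/(all_nthP (-1)) => i; rewrite st => /tP[].
Qed.

Lemma interlacing_factor p s (b : bool) : chain s -> (size p <= size s + 2)%N ->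
  (b -> root p (-1)) ->
  (forall i, (i <= size s + ~~ b)%N -> 0 < (-1) ^+ i * p.[knot s i]) ->
  exists2 t, interlaces t s /\ size t = (size s + ~~ b)%N &
    exists2 c, 0 < c & p = c *: (('X + 1) ^+ b * \prod_(r <- t) ('X - r%:P)).
Proof.
move=> cs szp rootb sgn.
have leKs : (size s + ~~ b <= (size s).+1)%N by rewrite -addn1 leq_add2l leq_b1.
have [t st [ts roots_t]] := interlacing_roots cs leKs sgn.
have ct := interlaces_chain cs ts.
have p0_gt0 : 0 < p.[0] by have := sgn 0 (leq0n _); rewrite expr0 mul1r.
have p_neq0 : p != 0 by apply: contraTneq p0_gt0 => ->; rewrite horner0 ltxx.
have def_p : p = lead_coef p *: \prod_(r <- t ++ nseq b (-1)) ('X - r%:P).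
  apply: eq_lead_prod_XsubC => //.
  - rewrite cat_uniq chain_uniq //; case: (b) => //=; rewrite andbT orbF.
    by apply/negP => /(chain_mem ct); rewrite ltxx.
  - by rewrite all_cat roots_t all_nseq; case: (b) rootb => // /(_ isT) ->.
  - apply: leq_trans szp _; rewrite size_cat size_nseq st -addnA.
    by case: (b); rewrite /= ?addn0 ?addn1 ?addn2.
exists t => //; exists (lead_coef p); last by rewrite -prod_XsubC_cat_nseq.
move: p0_gt0; rewrite {1}def_p hornerZ pmulr_lgt0 // horner_prod_XsubC_gt0 //.
apply/allP => r; rewrite mem_cat mem_nseq => /orP[/(chain_mem ct)/andP[//]|].
by move=> /andP[_ /eqP->]; rewrite ltrN10.
Qed.

End InterlacingRoots.

Section Factored.
Variable R : realFieldType.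
Implicit Types (c : R) (s t : seq R).

Definition factored c m s : {poly R} :=
  c *: (('X + 1) ^+ m * \prod_(r <- s) ('X - r%:P)).

Lemma factoredE c m s : factored c m s = c *: \prod_(r <- s ++ nseq m (-1)) ('X - r%:P).
Proof. by rewrite /factored prod_XsubC_cat_nseq. Qed.

Lemma lead_coef_factored c m s : lead_coef (factored c m s) = c.
Proof. by rewrite factoredE lead_coefZ lead_coef_prod_XsubC mulr1. Qed.

Lemma size_factored c m s : c != 0 -> size (factored c m s) = (size s + m).+1.
Proof. by move=> c0; rewrite factoredE size_scale // size_prod_XsubC size_cat size_nseq. Qed.

Lemma real_zeros_factored c m s : chain s -> real_zeros (factored c m s) (s ++ nseq m (-1)).
Proof.
move=> cs; split; last by rewrite lead_coef_factored -factoredE.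
by apply/(sortedP (-1)) => i _; rewrite !nth_cat_nseq -!knotS chain_knot_le.
Qed.

Lemma root_factored c m s x : c != 0 -> chain s -> root (factored c m s) x -> -1 <= x < 0.
Proof.
move=> c0 cs; rewrite factoredE rootZ // root_prod_XsubC mem_cat mem_nseq.
case/orP=> [/(chain_mem cs)/andP[/ltW-> ->] // | /andP[_ /eqP->]].
by rewrite lexx ltrN10.
Qed.

Lemma mup_factored c m s : c != 0 -> chain s -> mup (-1) (factored c m s) = m.
Proof.
move=> c0 cs; rewrite factoredE -mul_polyC mupMr ?rootC //.
rewrite mu_prod_XsubC count_cat count_nseq /= eqxx mul1n -[RHS]add0n; congr (_ + _)%N.
apply/eqP; rewrite -leqn0 leqNgt -has_count; apply/hasPn => r /(chain_mem cs).
by move=> /andP[lt_r _]; rewrite /= gt_eqF.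
Qed.

Lemma separates_factored c c' m m' s t : c != 0 -> c' != 0 ->
  chain s -> interlaces t s -> (size s <= size t)%N ->
  (size s + m <= size t + m' <= (size s + m).+1)%N ->
  separates (factored c m s) (factored c' m' t).
Proof.
move=> c0 c'0 cs ts le_st le_sz; have ct := interlaces_chain cs ts.
exists (s ++ nseq m (-1)), (t ++ nseq m' (-1)); split; try exact: real_zeros_factored.
  by rewrite !size_factored.
move=> i; rewrite size_cat size_nseq => lti.
have lti' : (i < size t + m')%N by case/andP: le_sz => /(leq_trans lti).
have nth_m1 (u : seq R) m'' j : (j < size u + m'')%N ->
    (u ++ nseq m'' (-1))`_j = nth (-1) u j.
  by move=> ltj; rewrite (set_nth_default (-1)) ?nth_cat_nseq // size_cat size_nseq.
rewrite (nth_m1 _ _ _ lti) (nth_m1 _ _ _ lti'); split.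
  have [ltit|leti] := ltnP i (size t).
    by have /andP[+ _] := ts i ltit; rewrite knotS => /ltW.
  by rewrite !nth_default // (leq_trans le_st).
rewrite size_cat size_nseq => ltSi; rewrite nth_m1 //.
have [ltSit|leSti] := ltnP i.+1 (size t).
  by have /andP[_ +] := ts i.+1 ltSit; rewrite knotS => /ltW.
by rewrite (nth_default _ leSti) -knotS chain_knot_ge.
Qed.

End Factored.

Section Recurrence.
Variable R : comNzRingType.
Implicit Types (p Q : {poly R}) (x : R).

Definition Rstep (N : nat) p : {poly R} := (1 + N%:R *: 'X^2) * p + 'X * (1 - 'X^2) * p^`().

Lemma RpolyS n : (1 <= n)%N -> Rpoly R n.+1 = Rstep n (Rpoly R n).
Proof. by case: n. Qed.

Lemma size_Rstep N p : (size p <= N.+1)%N -> (size (Rstep N p) <= N.+2)%N.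
Proof.
move=> /leq_sizeP p_hi; apply/leq_sizeP => j ltNj.
have -> : Rstep N p = p + N%:R *: ('X^2 * p) + 'X * p^`() - 'X^3 * p^`().
  by rewrite /Rstep -!mul_polyC; ring.
rewrite !coefB !coefD coefZ !coefXnM coefXM !coef_deriv (p_hi j) ?add0r; last lia.
case: j ltNj => [|[|k]] //= ltNk.
rewrite subn2 /= (p_hi k.+2) ?mul0rn ?addr0; last lia.
case: k ltNk => [|k] ltNk /=.
  have -> : N = 0%N by lia.
  by rewrite mul0r subr0.
have -> : (k.+3 - 3 = k)%N by lia.
have [<-|neq] := eqVneq k.+1 N; first by rewrite mulr_natl subrr.
by rewrite p_hi ?mulr0 ?mul0rn ?subrr //; lia.
Qed.

Lemma size_Rpoly n : (1 <= n)%N -> (size (Rpoly R n) <= n.+1)%N.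
Proof.
elim: n => [//|[_ _|n IH _]]; first by rewrite /Rpoly /= addrC -polyC1 size_XaddC.
by rewrite RpolyS // size_Rstep ?IH.
Qed.

Let horner_lin := (hornerD, hornerM, hornerZ, hornerXn, hornerX, hornerN, hornerC).

Definition Rstep_reduced (N a : nat) Q : {poly R} :=
  (1 + N%:R *: 'X^2) * Q + 'X * (1 - 'X) * (a.+1%:R *: Q + ('X + 1) * Q^`()).

Lemma Rstep_XaddC1_exp N a Q :
  Rstep N (('X + 1) ^+ a.+1 * Q) = ('X + 1) ^+ a.+1 * Rstep_reduced N a Q.
Proof.
rewrite /Rstep /Rstep_reduced derivM deriv_exp derivD derivX -polyC1 derivC addr0.
rewrite /= -mulr_natl -!mul_polyC polyC_natr polyC1 !exprS; set w := _ ^+ a.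
ring.
Qed.

Lemma horner0_Rstep_reduced N a Q : (Rstep_reduced N a Q).[0] = Q.[0].
Proof. by rewrite /Rstep_reduced !horner_lin; ring. Qed.

Lemma hornerN1_Rstep_reduced N a Q :
  (Rstep_reduced N a Q).[-1] = (1 + N%:R - 2 * a.+1%:R) * Q.[-1].
Proof. by rewrite /Rstep_reduced !horner_lin; ring. Qed.

Lemma horner_root_Rstep_reduced N a Q x : root Q x ->
  (Rstep_reduced N a Q).[x] = x * (1 - x) * (x + 1) * Q^`().[x].
Proof. by move=> /rootP Qx; rewrite /Rstep_reduced !horner_lin Qx; ring. Qed.

End Recurrence.

Lemma Rstep_reduced_knot_sign (R : realFieldType) n (c : R) s : 0 < c -> chain s ->
  forall i, (i <= size s + ~~ odd n)%N ->
  0 < (-1) ^+ i * (Rstep_reduced n n./2 (c *: \prod_(r <- s) ('X - r%:P))).[knot s i].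
Proof.
move=> c_gt0 cs; set Q := c *: _; have s_lt0 := chain_mem cs.
case=> [_|j]; first rewrite knot0 horner0_Rstep_reduced mul1r hornerZ mulr_gt0 //.
  by apply/horner_prod_XsubC_gt0/allP => r /s_lt0 /andP[].
rewrite knotS; have [ltjs _|lesj] := ltnP j (size s).
  set x := nth (-1) s j; have /s_lt0 /andP[x_gtN1 x_lt0] : x \in s by exact: mem_nth.
  rewrite horner_root_Rstep_reduced; last by rewrite rootZ ?gt_eqF ?root_prod_XsubC ?mem_nth.
  rewrite derivZ hornerZ exprS; set D := _^`().[x].
  rewrite [X in 0 < X](_ : _ = (- x * (1 - x) * (x + 1) * c) * ((-1) ^+ j * D)); last by ring.
  apply: mulr_gt0; first by rewrite !mulr_gt0 //; lra.
  have := deriv_prod_XsubC_sign (chain_uniq cs) (mem_nth (-1) ltjs).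
  by rewrite count_gt_nth_sorted ?chain_sorted.
(* The knot -1 is only reached for even n, where T(-1) = - Q(-1). *)
case: (odd n) (odd_double_half n) => /= n_eq lejn.
  by rewrite addn0 ltnNge lesj in lejn.
have -> : j = size s by lia.
set a := n./2 in n_eq *; rewrite add0n in n_eq.
rewrite nth_default // hornerN1_Rstep_reduced -n_eq hornerZ.
rewrite [X in 0 < X](_ : _ = c * ((-1) ^+ size s * (\prod_(r <- s) ('X - r%:P)).[-1])); last first.
  by rewrite exprS -muln2 natrM [a.+1%:R]mulrSr; ring.
apply: mulr_gt0 => //.
have -> : size s = count (fun r => -1 < r) s.
  by rewrite -count_predT; apply: eq_in_count => r /s_lt0 /andP[->].
by apply: horner_prod_XsubC_sign; apply/negP => /s_lt0; rewrite ltxx.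
Qed.

Definition Rpoly_shape (R : realFieldType) (n : nat) (s : seq R) : Prop :=
  [/\ chain s, size s = (uphalf n - 1)%N &
      exists2 c, 0 < c & Rpoly R n = factored c (n./2).+1 s].

Lemma Rpoly_shape_step (R : rcfType) n (s : seq R) : (1 <= n)%N -> Rpoly_shape n s ->
  exists2 t, Rpoly_shape n.+1 t & interlaces t s.
Proof.
move=> n_gt0 [cs sz_s [c c_gt0 def_R]].
have n_eq : n = (odd n + n./2.*2)%N by rewrite odd_double_half.
rewrite uphalf_half in sz_s.
set a := n./2 in n_eq sz_s def_R *; set Q := c *: \prod_(r <- s) ('X - r%:P).
have n_split : n = (a.+1 + size s)%N.
  by rewrite sz_s; move: n_gt0 n_eq; case: (odd n) => /=; lia.
have def_RS : Rpoly R n.+1 = ('X + 1) ^+ a.+1 * Rstep_reduced n a Q.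
  by rewrite RpolyS // def_R /factored scalerAr Rstep_XaddC1_exp.
have T_gt0 : 0 < (Rstep_reduced n a Q).[0].
  by have := Rstep_reduced_knot_sign (n := n) c_gt0 cs (leq0n _); rewrite mul1r.
have sz_T : (size (Rstep_reduced n a Q) <= size s + 2)%N.
  have T_neq0 : Rstep_reduced n a Q != 0 by apply: contraTneq T_gt0 => ->; rewrite horner0 ltxx.
  have := @size_Rpoly R n.+1 isT; rewrite def_RS.
  have -> : 'X + 1 = 'X - (-1)%:P :> {poly R} by rewrite polyCN polyC1 opprK.
  rewrite size_mul ?expf_neq0 ?polyXsubC_eq0 // size_exp_XsubC addSn /=.
  move: (size (Rstep_reduced n a Q)) => k; lia.
have root_m1 : odd n -> root (Rstep_reduced n a Q) (-1).
  move=> odd_n; apply/rootP; rewrite hornerN1_Rstep_reduced {1}n_eq odd_n /=.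
  by rewrite -muln2 natrD natrM [a.+1%:R]mulrSr; ring.
have [t [ts sz_t] [c' c'_gt0 def_T]] :=
  interlacing_factor cs sz_T root_m1 (Rstep_reduced_knot_sign c_gt0 cs).
exists t => //; split.
- exact: interlaces_chain cs ts.
- by rewrite sz_t sz_s /=; move: n_gt0 n_eq; case: (odd n) => /=; lia.
- exists c' => //; rewrite def_RS def_T /factored -scalerAr mulrA -exprD.
  by rewrite /= uphalf_half -/a addSn addnC.
Qed.

Lemma Rpoly_shape_exists (R : rcfType) n : (1 <= n)%N -> exists s : seq R, Rpoly_shape n s.
Proof.
elim: n => [//|[_ _|n IH _]].
  exists [::]; split=> //; first by rewrite /chain /= andbT ltrN10.
  exists 1; first exact: ltr01.
  by rewrite /factored scale1r expr1 big_nil mulr1 /Rpoly /= addrC.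
have [s shape_s] := IH isT.
by have [t shape_t _] := Rpoly_shape_step (ltn0Sn n) shape_s; exists t.
Qed.


Theorem mainTheorem5 (R : realType) (n : nat) (hn : (1 <= n)%N) :
  [/\ only_real_zeros (Rpoly R n),
      (forall x : R, root (Rpoly R n) x -> -1 <= x < 0),
      separates (Rpoly R n) (Rpoly R n.+1),
      mup (-1) (Rpoly R n) = (n./2).+1 &
      exists s : seq R,
        [/\ uniq s, all (fun r => r != -1) s, size s = (uphalf n - 1)%N &
            Rpoly R n = lead_coef (Rpoly R n) *:
              (('X + 1) ^+ (n./2).+1 * \prod_(r <- s) ('X - r%:P))]].
Proof.
have [s shape_s] := Rpoly_shape_exists R hn.
have [t [_ sz_t [c' c'_gt0 def_RS]] ts] := Rpoly_shape_step hn shape_s.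
case: shape_s => cs sz_s [c c_gt0 def_R]; rewrite def_R def_RS.
have [c_neq0 c'_neq0] := (lt0r_neq0 c_gt0, lt0r_neq0 c'_gt0).
split.
- by exists (s ++ nseq (n./2).+1 (-1)); apply: real_zeros_factored.
- by move=> x /(root_factored c_neq0 cs).
- apply: separates_factored => //; rewrite sz_s sz_t /= !uphalf_half;
    by move: hn (odd_double_half n); case: (odd n) => /=; lia.
- exact: mup_factored.
- exists s; split; rewrite ?lead_coef_factored ?chain_uniq //.
  by apply/allP => r /(chain_mem cs) /andP[/gt_eqF->].
Qed.
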